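(* For every $X\in\overline\Omega_{1/6}$, $$h(\mathcal{P}_{\mathcal{S}_{n,p}}(X))\le h(X)-\Big(\frac\beta4-\frac{M_1}{2}\Big)\|X^\top X-I_p\|_F^2 .$$
   Context: $f:\mathbb{R}^{n\times p}\to\mathbb{R}$ ($n\ge p$) is differentiable with $f,\nabla f$ locally Lipschitz. $\mathcal{A}(X):=\frac32I_p-\frac12X^\top X$, $h(X):=f(X\mathcal{A}(X))+\frac\beta4\|X^\top X-I_p\|_F^2$ with $\beta>0$, $G(X):=\nabla f(Y)|_{Y=X\mathcal{A}(X)}$. $\overline\Omega_r:=\{X\in\mathbb{R}^{n\times p}:\|X^\top X-I_p\|_F\le r\}$; $\Omega:=\{X:\|X\|_2\le1+\frac1{12}\}$; $M_1:=\sup_{X\in\Omega}\|G(X)\|_F$. For $X$ of full column rank with economic SVD $X=U\Sigma V^\top$ ($U\in\mathbb{R}^{n\times p}$, $V\in\mathbb{R}^{p\times p}$ with orthonormal columns, $\Sigma$ diagonal), $\mathcal{P}_{\mathcal{S}_{n,p}}(X):=UV^\top$, the orthogonal projection onto the Stiefel manifold $\mathcal{S}_{n,p}=\{X:X^\top X=I_p\}$. *)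

From HB Require Import structures.
From mathcomp Require Import all_boot all_order all_algebra.
From mathcomp Require Import all_classical all_reals all_analysis.
Set Implicit Arguments. Unset Strict Implicit. Unset Printing Implicit Defensive.
Import Order.TTheory GRing.Theory Num.Theory.
Import numFieldNormedType.Exports.
Local Open Scope ring_scope.
Local Open Scope classical_set_scope.

Definition frob_inner (R : realType) (m k : nat) (A B : 'M[R]_(m, k)) : R :=
  \sum_(i < m) \sum_(j < k) A i j * B i j.
Definition frob (R : realType) (m k : nat) (A : 'M[R]_(m, k)) : R :=
  Num.sqrt (frob_inner A A).

Definition spec_norm (R : realType) (m k : nat) (X : 'M[R]_(m, k)) : R :=
  sup [set frob (X *m v) | v in [set v : 'cV[R]_k | frob v <= 1]].

Definition is_gradient (R : realType) (n p : nat)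
  (f : 'M[R]_(n, p) -> R) (grad : 'M[R]_(n, p) -> 'M[R]_(n, p)) : Prop :=
  forall Y, differentiable f Y /\ forall H, 'd f Y H = frob_inner (grad Y) H.

Definition locally_lipschitz (R : realType) (n p a b : nat)
  (g : 'M[R]_(n, p) -> 'M[R]_(a, b)) : Prop :=
  forall X, exists r : R, exists L : R, 0 < r /\
    forall Y Z, frob (Y - X) < r -> frob (Z - X) < r ->
      frob (g Y - g Z) <= L * frob (Y - Z).

Definition locally_lipschitz_fun (R : realType) (n p : nat)
  (f : 'M[R]_(n, p) -> R) : Prop :=
  forall X, exists r : R, exists L : R, 0 < r /\
    forall Y Z, frob (Y - X) < r -> frob (Z - X) < r ->
      `|f Y - f Z| <= L * frob (Y - Z).

Definition calA (R : realType) (n p : nat) (X : 'M[R]_(n, p)) : 'M[R]_p :=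
  (3 / 2 : R)%:M - (1 / 2 : R) *: (X^T *m X).

Definition hfun (R : realType) (n p : nat) (f : 'M[R]_(n, p) -> R) (beta : R)
  (X : 'M[R]_(n, p)) : R :=
  f (X *m calA X) + beta / 4 * frob (X^T *m X - 1%:M) ^+ 2.

Definition Gfun (R : realType) (n p : nat)
  (grad : 'M[R]_(n, p) -> 'M[R]_(n, p)) (X : 'M[R]_(n, p)) : 'M[R]_(n, p) :=
  grad (X *m calA X).

Definition Omega (R : realType) (n p : nat) : set 'M[R]_(n, p) :=
  [set X | spec_norm X <= 1 + 1 / 12].
Definition M1 (R : realType) (n p : nat)
  (grad : 'M[R]_(n, p) -> 'M[R]_(n, p)) : R :=
  sup [set frob (Gfun grad X) | X in @Omega R n p].

Definition Omega_bar (R : realType) (n p : nat) (r : R) : set 'M[R]_(n, p) :=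
  [set X | frob (X^T *m X - 1%:M) <= r].

Definition is_econ_svd (R : realType) (n p : nat) (X : 'M[R]_(n, p))
  (U : 'M[R]_(n, p)) (S : 'M[R]_p) (V : 'M[R]_p) : Prop :=
  [/\ X = U *m S *m V^T, U^T *m U = 1%:M, V^T *m V = 1%:M,
      (forall i j : 'I_p, i != j -> S i j = 0) & (forall i, 0 <= S i i)].

(* Write X = U diag(s) V^T.  Then X A(X) = U diag(g(s)) V^T with
   g(x) = x (3 - x^2) / 2, the scalar Newton-Schulz step, and the penalty term
   vanishes at the polar factor U V^T, so h(U V^T) = f(U V^T).  Since
   1 - g(x) = (x - 1)^2 (x + 2) / 2 <= (x^2 - 1)^2 / 2 for x near 1, the
   difference U V^T - X A(X) = U diag(1 - g(s)) V^T has Frobenius norm at most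
   ||X^T X - I||^2 / 2.  By the mean value theorem, f(U V^T) - f(X A(X)) is the
   pairing of this difference with the gradient at an intermediate point; as g
   maps [0, 1] onto itself, that point is W A(W) for some W = U diag(e) V^T
   with e in [0, 1]^p, hence W lies in Omega and the gradient there has norm at
   most M1.  M1 is finite because X |-> ||G(X)|| is bounded on the compact set
   Omega, grad being locally Lipschitz. *)

From HB Require Import structures.
From mathcomp Require Import all_boot all_order all_algebra.
From mathcomp Require Import all_classical all_reals all_analysis.
From mathcomp Require Import ring lra.
Import Order.TTheory GRing.Theory Num.Theory.
Import numFieldNormedType.Exports.
Local Open Scope ring_scope.
Local Open Scope classical_set_scope.

Set Implicit Arguments. Unset Strict Implicit.

Section Frobenius.
Variable R : realType.
Implicit Types (m k l : nat).

Lemma frob_innerC m k (A B : 'M[R]_(m, k)) : frob_inner A B = frob_inner B A.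
Proof. by apply: eq_bigr => i _; apply: eq_bigr => j _; rewrite mulrC. Qed.

Lemma frob_innerDl m k (A B C : 'M[R]_(m, k)) :
  frob_inner (A + B) C = frob_inner A C + frob_inner B C.
Proof.
rewrite /frob_inner -big_split; apply: eq_bigr => i _.
by rewrite -big_split; apply: eq_bigr => j _; rewrite !mxE mulrDl.
Qed.

Lemma frob_innerZl m k a (A C : 'M[R]_(m, k)) :
  frob_inner (a *: A) C = a * frob_inner A C.
Proof.
rewrite /frob_inner mulr_sumr; apply: eq_bigr => i _.
by rewrite mulr_sumr; apply: eq_bigr => j _; rewrite !mxE mulrA.
Qed.

Lemma frob_innerNl m k (A C : 'M[R]_(m, k)) :
  frob_inner (- A) C = - frob_inner A C.
Proof. by rewrite -scaleN1r frob_innerZl mulN1r. Qed.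

Lemma frob_inner0l m k (C : 'M[R]_(m, k)) : frob_inner 0 C = 0.
Proof. by rewrite -(scale0r 0) frob_innerZl mul0r. Qed.

Lemma frob_innerDr m k (A B C : 'M[R]_(m, k)) :
  frob_inner C (A + B) = frob_inner C A + frob_inner C B.
Proof. by rewrite frob_innerC frob_innerDl !(frob_innerC C). Qed.

Lemma frob_innerZr m k a (A C : 'M[R]_(m, k)) :
  frob_inner C (a *: A) = a * frob_inner C A.
Proof. by rewrite frob_innerC frob_innerZl frob_innerC. Qed.

Lemma frob_innerNr m k (A C : 'M[R]_(m, k)) :
  frob_inner C (- A) = - frob_inner C A.
Proof. by rewrite frob_innerC frob_innerNl frob_innerC. Qed.

Lemma frob_inner_tr m k (A B : 'M[R]_(m, k)) : frob_inner A B = \tr (A^T *m B).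
Proof.
rewrite /mxtrace /frob_inner exchange_big; apply: eq_bigr => j _.
by rewrite mxE; apply: eq_bigr => i _; rewrite mxE.
Qed.

Lemma frob_inner_ge0 m k (A : 'M[R]_(m, k)) : 0 <= frob_inner A A.
Proof. by do 2![apply: sumr_ge0 => ? _]; rewrite -expr2 sqr_ge0. Qed.

Lemma frob_inner_eq0 m k (A : 'M[R]_(m, k)) : (frob_inner A A == 0) = (A == 0).
Proof.
apply/idP/eqP => [/eqP A0|->]; last by rewrite frob_inner0l.
apply/matrixP => i j; rewrite mxE; apply/eqP; rewrite -sqrf_eq0 expr2.
have sq_ge0 (x : R) : 0 <= x * x by rewrite -expr2 sqr_ge0.
move/psumr_eq0P: A0 => /(_ (fun i' _ => sumr_ge0 _ (fun j' _ => sq_ge0 _)) i isT).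
by move/psumr_eq0P => ->.
Qed.

Lemma frob_ge0 m k (A : 'M[R]_(m, k)) : 0 <= frob A.
Proof. exact: sqrtr_ge0. Qed.

Lemma frob_sqr m k (A : 'M[R]_(m, k)) : frob A ^+ 2 = frob_inner A A.
Proof. by rewrite sqr_sqrtr // frob_inner_ge0. Qed.

Lemma frob0 m k : frob (0 : 'M[R]_(m, k)) = 0.
Proof. by rewrite /frob frob_inner0l sqrtr0. Qed.

Lemma frob_eq0 m k (A : 'M[R]_(m, k)) : (frob A == 0) = (A == 0).
Proof. by rewrite -frob_inner_eq0 -frob_sqr sqrf_eq0. Qed.

Lemma frob_le m k (A : 'M[R]_(m, k)) c :
  0 <= c -> frob_inner A A <= c ^+ 2 -> frob A <= c.
Proof. by move=> c0 h; rewrite -(ger0_norm c0) -sqrtr_sqr ler_sqrt ?sqr_ge0. Qed.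

Lemma frob_inner_le m k (A B : 'M[R]_(m, k)) : frob_inner A B <= frob A * frob B.
Proof.
have := frob_inner_ge0 (frob B *: A - frob A *: B).
rewrite frob_innerDl !frob_innerDr !frob_innerNl !frob_innerNr !frob_innerZl
  !frob_innerZr opprK (frob_innerC B A) -!frob_sqr => expand_ge0.
have [/eqP|AB0] := eqVneq (frob A * frob B) 0.
  rewrite mulf_eq0 !frob_eq0 => /orP[]/eqP->.
    by rewrite frob_inner0l frob0 mul0r.
  by rewrite frob_innerC frob_inner0l frob0 mulr0.
have AB_gt0 : 0 < frob A * frob B by rewrite lt0r AB0 mulr_ge0 ?frob_ge0.
nra.
Qed.

Lemma frobN m k (A : 'M[R]_(m, k)) : frob (- A) = frob A.
Proof. by rewrite /frob frob_innerNl frob_innerNr opprK. Qed.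

Lemma frobZ m k a (A : 'M[R]_(m, k)) : frob (a *: A) = `|a| * frob A.
Proof.
by rewrite /frob frob_innerZl frob_innerZr mulrA -expr2 sqrtrM ?sqr_ge0 // sqrtr_sqr.
Qed.

Lemma normr_frob_inner_le m k (A B : 'M[R]_(m, k)) :
  `|frob_inner A B| <= frob A * frob B.
Proof.
have [_|_] := ler0P (frob_inner A B); last exact: frob_inner_le.
by rewrite -frobN -frob_innerNl frob_inner_le.
Qed.

Lemma ler_frobD m k (A B : 'M[R]_(m, k)) : frob (A + B) <= frob A + frob B.
Proof.
apply: frob_le; first by rewrite addr_ge0 ?frob_ge0.
rewrite frob_innerDl !frob_innerDr (frob_innerC B A) -!frob_sqr.
have := frob_inner_le A B; nra.
Qed.

Lemma ler_dist_frob m k (A B : 'M[R]_(m, k)) : `|frob A - frob B| <= frob (A - B).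
Proof.
rewrite ler_norml; apply/andP; split.
  by have := ler_frobD (B - A) A; rewrite subrK -opprB frobN; lra.
by have := ler_frobD (A - B) B; rewrite subrK; lra.
Qed.

Lemma frob_trmx m k (A : 'M[R]_(m, k)) : frob A^T = frob A.
Proof.
rewrite /frob /frob_inner exchange_big; congr Num.sqrt.
by apply: eq_bigr => j _; apply: eq_bigr => i _; rewrite !mxE.
Qed.

Lemma frob_mulmx_orthl m k l (Q : 'M[R]_(m, k)) (A : 'M[R]_(k, l)) :
  Q^T *m Q = 1%:M -> frob (Q *m A) = frob A.
Proof.
by move=> hQ; rewrite /frob !frob_inner_tr trmx_mul -mulmxA (mulmxA Q^T) hQ mul1mx.
Qed.

Lemma frob_mulmx_orthr m k (Q : 'M[R]_k) (A : 'M[R]_(m, k)) :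
  Q^T *m Q = 1%:M -> frob (A *m Q^T) = frob A.
Proof. by move=> hQ; rewrite -frob_trmx trmx_mul trmxK frob_mulmx_orthl ?frob_trmx. Qed.

Lemma normr_entry_le_frob m k (A : 'M[R]_(m, k)) i j : `|A i j| <= frob A.
Proof.
have sq_ge0 (x : R) : 0 <= x * x by rewrite -expr2 sqr_ge0.
rewrite -(sqrtr_sqr (A i j)) ler_sqrt ?frob_inner_ge0 // /frob_inner.
rewrite (bigD1 i) //= (bigD1 j) //= expr2 -addrA lerDl addr_ge0 //.
  exact: sumr_ge0.
by do 2![apply: sumr_ge0 => ? _].
Qed.

Lemma frob_mulmx_le m k l (A : 'M[R]_(m, k)) (B : 'M[R]_(k, l)) :
  frob (A *m B) <= frob A * frob B.
Proof.
apply: frob_le; first by rewrite mulr_ge0 ?frob_ge0.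
have frob_rows m' k' (C : 'M[R]_(m', k')) :
    frob C ^+ 2 = \sum_i frob (row i C) ^+ 2.
  rewrite frob_sqr; apply: eq_bigr => i _; rewrite frob_sqr /frob_inner big_ord1.
  by apply: eq_bigr => j _; rewrite !mxE.
rewrite exprMn frob_rows -frob_trmx frob_rows mulr_suml; apply: ler_sum => i _.
rewrite mulr_sumr; apply: ler_sum => j _.
have -> : (A *m B) i j = frob_inner (row i A) (row j B^T).
  by rewrite mxE /frob_inner big_ord1; apply: eq_bigr => j' _; rewrite !mxE.
rewrite -expr2 -exprMn -real_normK ?num_real // ler_sqr ?nnegrE ?mulr_ge0 ?frob_ge0 //.
exact: normr_frob_inner_le.
Qed.

Lemma frob_le_entries m k (A : 'M[R]_(m, k)) (c : R) :
  0 <= c -> (forall i j, `|A i j| <= c) -> frob A <= (m * k)%:R * c.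
Proof.
move=> c0 hA; apply: frob_le; first by rewrite mulr_ge0.
apply: (@le_trans _ _ (\sum_(i < m) \sum_(j < k) c ^+ 2)).
  do 2![apply: ler_sum => ? _]; rewrite -expr2 -real_normK ?num_real //.
  by rewrite ler_sqr ?nnegrE.
rewrite !sumr_const !card_ord -mulrnA mulnC -[c ^+ 2 *+ _]mulr_natl exprMn.
rewrite ler_wpM2r ?sqr_ge0 // -natrX ler_nat.
by case: (m * k)%N => // N; rewrite expnS expn1 leq_pmulr.
Qed.

Lemma frob_diag k (d : 'rV[R]_k) : frob (diag_mx d) ^+ 2 = \sum_i d 0 i ^+ 2.
Proof.
rewrite frob_sqr; apply: eq_bigr => i _; rewrite (bigD1 i) //= big1 ?addr0.
  by rewrite mxE eqxx mulr1n expr2.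
by move=> j ji; rewrite !mxE eq_sym (negbTE ji) mulr0n mulr0.
Qed.

Lemma frob_diag_le_sum k (d : 'rV[R]_k) : frob (diag_mx d) <= \sum_i `|d 0 i|.
Proof.
apply: frob_le; first exact: sumr_ge0.
rewrite -frob_sqr frob_diag [in leRHS]expr2 mulr_suml; apply: ler_sum => i _.
rewrite -real_normK ?num_real // expr2 ler_wpM2l //.
by rewrite (bigD1 i) //= lerDl sumr_ge0.
Qed.

Lemma frob_diag_mulmx_le k l (d : 'rV[R]_k) (A : 'M[R]_(k, l)) :
  (forall i, `|d 0 i| <= 1) -> frob (diag_mx d *m A) <= frob A.
Proof.
move=> hd; apply: frob_le; first exact: frob_ge0.
rewrite frob_sqr mul_diag_mx; apply: ler_sum => i _; apply: ler_sum => j _.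
rewrite !mxE -!expr2 exprMn -[leRHS]mul1r ler_wpM2r ?sqr_ge0 //.
by rewrite -real_normK ?num_real // -(expr1n _ 2) ler_sqr ?nnegrE.
Qed.

End Frobenius.

Section SpectralNorm.
Variable R : realType.
Implicit Types (m k : nat).

Lemma spec_norm_has_ubound m k (X : 'M[R]_(m, k)) :
  has_ubound [set frob (X *m v) | v in [set v : 'cV[R]_k | frob v <= 1]].
Proof.
exists (frob X) => _ [v v1 <-]; apply: le_trans (frob_mulmx_le X v) _.
by rewrite -[leRHS]mulr1 ler_wpM2l ?frob_ge0.
Qed.

Lemma spec_norm_le m k (X : 'M[R]_(m, k)) c :
  (forall v : 'cV[R]_k, frob v <= 1 -> frob (X *m v) <= c) -> spec_norm X <= c.
Proof.
move=> hX; apply: ge_sup; last by move=> _ [v v1 <-]; exact: hX.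
by exists (frob (X *m (0 : 'cV_k))), 0; rewrite //= frob0.
Qed.

Lemma normr_entry_le_spec_norm m k (X : 'M[R]_(m, k)) i j :
  `|X i j| <= spec_norm X.
Proof.
pose e : 'cV[R]_k := delta_mx j 0.
have -> : X i j = (X *m e) i 0.
  rewrite mxE (bigD1 j) //= !mxE !eqxx mulr1 big1 ?addr0 // => j' j'j.
  by rewrite !mxE (negbTE j'j) mulr0.
apply: le_trans (normr_entry_le_frob _ _ _) _.
apply: (ub_le_sup (spec_norm_has_ubound X)); exists e => //=.
apply: frob_le => //; rewrite expr1n /frob_inner (bigD1 j) //= big_ord1 !mxE !eqxx.
by rewrite mulr1 big1 ?addr0 // => i' i'j; rewrite big_ord1 !mxE (negbTE i'j) mulr0.
Qed.

End SpectralNorm.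

Section LocallyLipschitz.
Variable R : realType.
Implicit Types (m k a b : nat).

Lemma normr_entry_le_mx_norm m k (A : 'M[R]_(m, k)) i j : `|A i j| <= `|A|.
Proof.
rewrite [leRHS]/Num.Def.normr /= mx_normrE.
by apply: le_trans (le_bigmax _ _ (i, j)).
Qed.

Lemma frob_vec_mx_le m k (v : 'rV[R]_(m * k)) : frob (vec_mx v) <= (m * k)%:R * `|v|.
Proof.
by apply: frob_le_entries => // i j; rewrite mxE normr_entry_le_mx_norm.
Qed.

Lemma continuous_frob_lipschitz m k a b (g : 'M[R]_(m, k) -> 'M[R]_(a, b)) :
  locally_lipschitz g -> continuous (fun v : 'rV[R]_(m * k) => frob (g (vec_mx v))).
Proof.
move=> hg v; have [r [L [r0 hL]]] := hg (vec_mx v).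
apply/(cvgrPdist_lt (FF := nbhs_filter v)) => e e0.
pose N := ((m * k)%:R + 1) * (`|L| + 1).
have N0 : 0 < N by rewrite mulr_gt0 // ltr_wpDl.
have d0 : 0 < Num.min r e / N by rewrite divr_gt0 // lt_min r0 e0.
near=> w.
have vw : `|v - w| < Num.min r e / N by near: w; exact: cvgr_dist_lt.
have Nt : N * `|v - w| < Num.min r e by rewrite -ltr_pdivlMl // mulrC.
have dist_vw : frob (vec_mx w - vec_mx v) <= (m * k)%:R * `|v - w|.
  by rewrite -linearB /= distrC frob_vec_mx_le.
have dist_vw_N : frob (vec_mx w - vec_mx v) <= N * `|v - w|.
  apply: le_trans dist_vw _; rewrite ler_wpM2r // /N.
  by rewrite -[X in X <= _]mulr1 ler_pM ?lerDl ?ler_wpDl.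
have [rmin emin] : Num.min r e <= r /\ Num.min r e <= e by rewrite !ge_min !lexx orbT.
have := hL (vec_mx v) (vec_mx w); rewrite subrr frob0 => /(_ r0 ltac:(lra)).
rewrite -[frob (vec_mx v - _)]frobN opprB => lip.
apply: le_lt_trans (ler_dist_frob _ _) _; apply: le_lt_trans lip _.
apply: (@le_lt_trans _ _ (`|L| * ((m * k)%:R * `|v - w|))); last first.
  have mk0 : 0 <= ((m * k)%:R : R) by [].
  have := normr_ge0 L; have := normr_ge0 (v - w); rewrite /N in Nt; nra.
apply: le_trans (_ : _ <= `|L| * frob (vec_mx w - vec_mx v)) _.
  by rewrite ler_wpM2r ?frob_ge0 ?ler_norm.
by rewrite ler_wpM2l.
Unshelve. all: by end_near.
Qed.

Lemma locally_lipschitz_bounded_box m k a b (g : 'M[R]_(m, k) -> 'M[R]_(a, b))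
    (c : R) :
  locally_lipschitz g ->
  exists M, forall A : 'M[R]_(m, k), (forall i j, `|A i j| <= c) -> frob (g A) <= M.
Proof.
move=> hg.
pose box := [set v : 'rV[R]_(m * k) | forall i, `[(- c), c]%classic (v 0 i)].
have box_compact : compact box.
  apply: (@rV_compact _ _ (fun=> `[(- c), c]%classic)) => _.
  exact: segment_compact.
have := continuous_compact (continuous_subspaceT (continuous_frob_lipschitz hg)).
move=> /(_ _ box_compact) /compact_bounded [M [_ hM]].
exists (M + 1) => A hA.
have box_A : box (mxvec A).
  move=> ij; case/mxvec_indexP: ij => i j.
  by move: (hA i j); rewrite /= in_itv /= ler_norml mxvecE.
have := hM (M + 1) ltac:(lra) (frob (g (vec_mx (mxvec A)))).
rewrite mxvecK => /(_ ltac:(by exists (mxvec A); rewrite ?mxvecK)).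
exact: le_trans (ler_norm _).
Qed.

End LocallyLipschitz.

Lemma calA_entries_bounded (R : realType) n p (c : R) : 0 <= c ->
  exists C, forall X : 'M[R]_(n, p),
    (forall i j, `|X i j| <= c) -> forall i j, `|(X *m calA X) i j| <= C.
Proof.
move=> c0; pose b := (n * p)%:R * c; pose a := frob ((3 / 2 : R)%:M : 'M[R]_p).
exists (b * (a + 1 / 2 * b ^+ 2)); move=> X hX i j.
apply: le_trans (normr_entry_le_frob _ i j) _.
have Xb : frob X <= b := frob_le_entries c0 hX.
have calA_le : frob (calA X) <= a + 1 / 2 * frob X ^+ 2.
  apply: le_trans (ler_frobD _ _) _; rewrite frobN frobZ ger0_norm // lerD2l.
  rewrite ler_wpM2l // expr2; apply: le_trans (frob_mulmx_le _ _) _.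
  by rewrite frob_trmx.
apply: le_trans (frob_mulmx_le _ _) _; apply: ler_pM; rewrite ?frob_ge0 //.
apply: le_trans calA_le _; rewrite lerD2l ler_wpM2l // ler_sqr ?nnegrE ?frob_ge0 //.
exact: le_trans (frob_ge0 X) Xb.
Qed.

Section GradientBound.
Variables (R : realType) (n p : nat) (grad : 'M[R]_(n, p) -> 'M[R]_(n, p)).
Hypothesis hgL : locally_lipschitz grad.

Lemma Gfun_le_M1 X : Omega X -> frob (Gfun grad X) <= M1 grad.
Proof.
have [C hC] := @calA_entries_bounded R n p (1 + 1 / 12) ltac:(lra).
have [M hM] := locally_lipschitz_bounded_box C hgL.
have entries_le X' : Omega X' -> forall i j, `|X' i j| <= 1 + 1 / 12.
  by move=> hX' i j; apply: le_trans (normr_entry_le_spec_norm X' i j) hX'.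
move=> hX; apply: ub_le_sup; last by exists X.
by exists M; move=> _ [X' /entries_le hX' <-]; apply/hM/hC.
Qed.

Lemma M1_ge0 : 0 <= M1 grad.
Proof.
apply: le_trans (frob_ge0 _) (Gfun_le_M1 (X := 0) _).
by apply: spec_norm_le => v _; rewrite mul0mx frob0.
Qed.

End GradientBound.

Section NewtonSchulz.
Variable R : realType.

Definition newton_schulz (x : R) : R := x * (3 / 2 - 1 / 2 * x ^+ 2).

Lemma newton_schulz1 : newton_schulz 1 = 1.
Proof. by rewrite /newton_schulz; field. Qed.

Lemma continuous_newton_schulz : continuous newton_schulz.
Proof.
move=> x; apply: cvgM; first exact: cvg_id.
apply: cvgB; first exact: cvg_cst.
by apply: cvgM; [exact: cvg_cst | rewrite expr2; apply: cvgM; exact: cvg_id].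
Qed.

Lemma newton_schulz_onto01 y : 0 <= y <= 1 ->
  exists2 x, 0 <= x <= 1 & newton_schulz x = y.
Proof.
move=> y01.
have := @IVT R newton_schulz 0 1 y ler01
  (continuous_subspaceT continuous_newton_schulz).
rewrite newton_schulz1 /newton_schulz mul0r (min_l ler01) (max_r ler01).
by case=> // x; rewrite in_itv => x01 <-; exists x.
Qed.

Lemma newton_schulz_ge0 x : 0 <= x -> x ^+ 2 <= 3 -> 0 <= newton_schulz x.
Proof. by move=> x0 x3; rewrite /newton_schulz mulr_ge0 //; lra. Qed.

Lemma newton_schulz_le1 x : 0 <= x -> newton_schulz x <= 1.
Proof.
move=> x0; rewrite -subr_ge0.
have -> : 1 - newton_schulz x = (x - 1) ^+ 2 * (x + 2) / 2 by rewrite /newton_schulz; field.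
by rewrite divr_ge0 // mulr_ge0 ?sqr_ge0 //; lra.
Qed.

Lemma one_sub_newton_schulz_le x : 0 <= x -> 1 <= x ^+ 2 + x ->
  1 - newton_schulz x <= (x ^+ 2 - 1) ^+ 2 / 2.
Proof.
move=> x0 x1; rewrite -subr_ge0.
have -> : (x ^+ 2 - 1) ^+ 2 / 2 - (1 - newton_schulz x) =
    (x - 1) ^+ 2 * (x ^+ 2 + x - 1) / 2 by rewrite /newton_schulz; field.
by rewrite divr_ge0 // mulr_ge0 ?sqr_ge0 //; lra.
Qed.

End NewtonSchulz.

Lemma gradient_increment_le (R : realType) n p (f : 'M[R]_(n, p) -> R) grad
    (Z D : 'M[R]_(n, p)) (M : R) :
  is_gradient f grad ->
  (forall t, 0 < t < 1 -> frob (grad (Z + t *: D)) <= M) ->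
  f (Z + D) - f Z <= M * frob D.
Proof.
move=> hgrad hM; pose phi t := f (Z + t *: D).
have phi_quot t : (fun h : R => h^-1 *: ((phi \o shift t) (h *: 1) - phi t)) =
    (fun h : R => h^-1 *: ((f \o shift (Z + t *: D)) (h *: D) - f (Z + t *: D))).
  by apply: funext => h /=; rewrite /phi [_%:A]mulr1 scalerDl addrCA.
have phi_derivable t : derivable phi t 1.
  rewrite /derivable phi_quot -/(derivable f (Z + t *: D) D).
  exact: diff_derivable (proj1 (hgrad _)).
have phi_derive t : 'D_1 phi t = frob_inner (grad (Z + t *: D)) D.
  rewrite /derive phi_quot -/(derive f (Z + t *: D) D).
  by rewrite deriveE; [exact: (proj2 (hgrad _)) | exact: (proj1 (hgrad _))].
case: (@MVT R phi (fun t => frob_inner (grad (Z + t *: D)) D) 0 1 ltr01).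
- by move=> t _; apply: DeriveDef.
- exact: derivable_within_continuous.
move=> t; rewrite in_itv /phi /= scale1r scale0r addr0 subr0 mulr1 => /hM Mt ->.
by apply: le_trans (frob_inner_le _ _) _; rewrite ler_wpM2r ?frob_ge0.
Qed.

Section SvdMx.
Variables (R : realType) (n p : nat) (U : 'M[R]_(n, p)) (V : 'M[R]_p).
Hypotheses (hU : U^T *m U = 1%:M) (hV : V^T *m V = 1%:M).

Definition svd_mx (d : 'rV[R]_p) : 'M[R]_(n, p) := U *m diag_mx d *m V^T.

Let hVt : V *m V^T = 1%:M. Proof. exact: mulmx1C. Qed.

Lemma svd_mxD (d e : 'rV[R]_p) : svd_mx (d + e) = svd_mx d + svd_mx e.
Proof. by rewrite /svd_mx raddfD mulmxDr mulmxDl. Qed.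

Lemma svd_mxB (d e : 'rV[R]_p) : svd_mx (d - e) = svd_mx d - svd_mx e.
Proof. by rewrite /svd_mx raddfB mulmxBr mulmxBl. Qed.

Lemma svd_mxZ a (d : 'rV[R]_p) : svd_mx (a *: d) = a *: svd_mx d.
Proof. by rewrite /svd_mx linearZ /= -scalemxAr -scalemxAl. Qed.

Lemma svd_mx_const1 : svd_mx (const_mx 1) = U *m V^T.
Proof. by rewrite /svd_mx diag_const_mx mulmx1. Qed.

Lemma frob_svd_mx (d : 'rV[R]_p) : frob (svd_mx d) = frob (diag_mx d).
Proof. by rewrite /svd_mx frob_mulmx_orthr // frob_mulmx_orthl. Qed.

Lemma svd_mx_mul (d e : 'rV[R]_p) :
  svd_mx d *m (V *m diag_mx e *m V^T) = svd_mx (\row_i (d 0 i * e 0 i)).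
Proof.
by rewrite /svd_mx !mulmxA -(mulmxA _ V^T) hV mulmx1 -(mulmxA U) mulmx_diag.
Qed.

Lemma tr_svd_mx_mul (d e : 'rV[R]_p) :
  (svd_mx d)^T *m svd_mx e = V *m diag_mx (\row_i (d 0 i * e 0 i)) *m V^T.
Proof.
rewrite /svd_mx !trmx_mul trmxK tr_diag_mx !mulmxA -(mulmxA _ U^T) hU mulmx1.
by rewrite -[V *m _ *m diag_mx e]mulmxA mulmx_diag.
Qed.

Lemma frob_gram_svd_mx (d : 'rV[R]_p) :
  frob ((svd_mx d)^T *m svd_mx d - 1%:M) = frob (diag_mx (\row_i (d 0 i ^+ 2 - 1))).
Proof.
have -> : diag_mx (\row_i (d 0 i ^+ 2 - 1)) =
    diag_mx (\row_i (d 0 i * d 0 i)) - diag_mx (const_mx 1).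
  by rewrite -raddfB; congr diag_mx; apply/rowP => i; rewrite !mxE expr2.
have -> : 1%:M = V *m diag_mx (const_mx 1) *m V^T by rewrite diag_const_mx mulmx1.
by rewrite tr_svd_mx_mul -mulmxBl -mulmxBr frob_mulmx_orthr // frob_mulmx_orthl.
Qed.

Lemma calA_svd_mx (d : 'rV[R]_p) : svd_mx d *m calA (svd_mx d) = svd_mx (map_mx (@newton_schulz R) d).
Proof.
rewrite /calA tr_svd_mx_mul mulmxBr mul_mx_scalar -scalemxAr svd_mx_mul.
rewrite -!svd_mxZ -svd_mxB.
by congr svd_mx; apply/rowP => i; rewrite !mxE /newton_schulz; ring.
Qed.

Lemma spec_norm_svd_mx_le1 (d : 'rV[R]_p) : (forall i, `|d 0 i| <= 1) -> spec_norm (svd_mx d) <= 1.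
Proof.
move=> d1; apply: spec_norm_le => v v1.
rewrite /svd_mx -!mulmxA frob_mulmx_orthl //.
apply: le_trans (frob_diag_mulmx_le _ d1) _.
by rewrite frob_mulmx_orthl // trmxK.
Qed.

Lemma hfun_polar f beta : hfun f beta (U *m V^T) = f (U *m V^T).
Proof.
rewrite /hfun -svd_mx_const1 calA_svd_mx frob_gram_svd_mx.
have -> : map_mx (@newton_schulz R) (const_mx 1) = const_mx 1 :> 'rV[R]_p.
  by apply/rowP => i; rewrite !mxE newton_schulz1.
have -> : \row_i ((const_mx 1 : 'rV[R]_p) 0 i ^+ 2 - 1) = 0.
  by apply/rowP => i; rewrite !mxE expr1n subrr.
by rewrite raddf0 frob0 expr0n /= mulr0 addr0.
Qed.

End SvdMx.

Section NewtonSchulzStep.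
Variables (R : realType) (n p : nat) (U : 'M[R]_(n, p)) (V : 'M[R]_p) (s : 'rV[R]_p).
Hypotheses (hU : U^T *m U = 1%:M) (hV : V^T *m V = 1%:M).
Hypotheses (hs0 : forall i, 0 <= s 0 i) (hs : forall i, `|s 0 i ^+ 2 - 1| <= 1 / 2).

Local Notation Z := (svd_mx U V (map_mx (@newton_schulz R) s)).

Let newton_schulz_s_bounds i :
  [/\ 0 <= newton_schulz (s 0 i), newton_schulz (s 0 i) <= 1
    & 1 - newton_schulz (s 0 i) <= (s 0 i ^+ 2 - 1) ^+ 2 / 2].
Proof.
have := hs i; rewrite ler_norml => /andP[si1 si2]; have si0 := hs0 i.
split; [apply: newton_schulz_ge0 | apply: newton_schulz_le1 |
        apply: one_sub_newton_schulz_le] => //; nra.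
Qed.

Lemma polar_sub_newton_schulz_le :
  frob (U *m V^T - Z) <= frob (diag_mx (\row_i (s 0 i ^+ 2 - 1))) ^+ 2 / 2.
Proof.
rewrite -(svd_mx_const1 U V) -svd_mxB frob_svd_mx //.
apply: le_trans (frob_diag_le_sum _) _; rewrite frob_diag mulr_suml.
apply: ler_sum => i _; have [_ ns1 ns_le] := newton_schulz_s_bounds i.
by rewrite !mxE ger0_norm ?subr_ge0.
Qed.

Lemma newton_schulz_segment t : 0 <= t <= 1 ->
  exists2 W, Omega W & W *m calA W = Z + t *: (U *m V^T - Z).
Proof.
move=> /andP[t0 t1].
have : forall i, exists x, 0 <= x <= 1 /\
    newton_schulz x = newton_schulz (s 0 i) + t * (1 - newton_schulz (s 0 i)).
  move=> i; have [ns0 ns1 _] := newton_schulz_s_bounds i.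
  have [|x x01 <-] := @newton_schulz_onto01 R
      (newton_schulz (s 0 i) + t * (1 - newton_schulz (s 0 i))).
    by apply/andP; split; nra.
  by exists x.
move=> /boolp.choice [e he]; exists (svd_mx U V (\row_i e i)).
  apply: le_trans (spec_norm_svd_mx_le1 hU hV _) _; last by lra.
  by move=> i; rewrite mxE; have [/andP[e0 e1] _] := he i; rewrite ger0_norm.
rewrite calA_svd_mx // -(svd_mx_const1 U V) -svd_mxB -svd_mxZ -svd_mxD.
by congr svd_mx; apply/rowP => i; rewrite !mxE; have [_ ->] := he i.
Qed.

End NewtonSchulzStep.

Unset Implicit Arguments. Set Strict Implicit.

Theorem mainTheorem15 (R : realType) (n p : nat) (hnp : (p <= n)%N)
  (f : 'M[R]_(n, p) -> R) (grad : 'M[R]_(n, p) -> 'M[R]_(n, p))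
  (hgrad : is_gradient f grad)
  (hfL : locally_lipschitz_fun f) (hgL : locally_lipschitz grad)
  (beta : R) (hbeta : 0 < beta)
  (X : 'M[R]_(n, p)) (hX : X \in @Omega_bar R n p (1 / 6))
  (U : 'M[R]_(n, p)) (S : 'M[R]_p) (V : 'M[R]_p)
  (hsvd : is_econ_svd X U S V) :
  hfun f beta (U *m V^T) <=
    hfun f beta X - (beta / 4 - M1 grad / 2) * frob (X^T *m X - 1%:M) ^+ 2.
Proof.
case: hsvd => X_svd hU hV S_diag S_ge0; subst X.
have [s S_s] : exists s, S = diag_mx s.
  by apply/diag_mxP/is_diag_mxP => i j ij; apply: S_diag; rewrite -val_eqE.
subst S.
have s0 i : 0 <= s 0 i by move: (S_ge0 i); rewrite mxE eqxx mulr1n.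
rewrite -/(svd_mx U V s) in hX *.
rewrite hfun_polar // /hfun calA_svd_mx // frob_gram_svd_mx //.
set q := frob (diag_mx _); set Z := svd_mx U V _.
have q6 : q <= 1 / 6 by move: hX; rewrite inE /Omega_bar /= frob_gram_svd_mx.
have hs i : `|s 0 i ^+ 2 - 1| <= 1 / 2.
  have := normr_entry_le_frob (diag_mx (\row_i (s 0 i ^+ 2 - 1))) i i.
  rewrite !mxE eqxx mulr1n -/q; lra.
have increment : f (U *m V^T) - f Z <= M1 grad * frob (U *m V^T - Z).
  rewrite -{1}(subrKC Z (U *m V^T)); apply: gradient_increment_le hgrad _.
  move=> t /andP[t0 t1].
  have [|W hW <-] := newton_schulz_segment hU hV s0 hs (t := t); first lra.
  exact: Gfun_le_M1.
have := polar_sub_newton_schulz_le hU hV s0 hs; rewrite -/q -/Z.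
have := M1_ge0 hgL; have := frob_ge0 (U *m V^T - Z); nra.
Qed.
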